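(* Let $G$ be a finite, simple, connected graph with $\dim_{wt}(G)=2$. Then $G$ has no complete vertex of degree more than three.
   Context: $d(x,y)$ is the shortest-path distance. A vertex $v$ is a complete vertex if its neighborhood $N(v)$ induces a complete graph $K_{d(v)}$. A set $W\subseteq V(G)$ is a resolving set if for every two distinct vertices $y,z$ there is $x\in W$ with $d(y,x)\ne d(z,x)$. A set $W$ is a weak total resolving set (WTR-set) if $W$ is resolving and, for every $w\in W$ and every $x\in V(G)\setminus W$, there is $w'\in W\setminus\{w\}$ with $d(x,w')\ne d(w,w')$. $\dim_{wt}(G)$ is the minimum cardinality of a WTR-set. *)

From mathcomp Require Import all_boot.
Set Implicit Arguments. Unset Strict Implicit. Unset Printing Implicit Defensive.

Definition simple_graph (T : finType) (e : rel T) : Prop :=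
  symmetric e /\ irreflexive e.

Definition connected_graph (T : finType) (e : rel T) : Prop :=
  forall x y : T, connect e x y.

Definition nbhd (T : finType) (e : rel T) (v : T) : {set T} := [set u | e v u].
Definition degree (T : finType) (e : rel T) (v : T) : nat := #|nbhd e v|.

Fixpoint ball (T : finType) (e : rel T) (x : T) (n : nat) : {set T} :=
  match n with
  | 0 => [set x]
  | n'.+1 => ball e x n' :|: [set y | [exists z in ball e x n', e z y]]
  end.

(* shortest-path distance: least n with y in ball x n.  For connected graphs
   the distance is always < #|T|, so the default value #|T| is never used. *)
Definition dist (T : finType) (e : rel T) (x y : T) : nat :=
  \big[minn/#|T|]_(n < #|T| | y \in ball e x n) (n : nat).

Definition complete_vertex (T : finType) (e : rel T) (v : T) : Prop :=
  forall u w, u \in nbhd e v -> w \in nbhd e v -> u != w -> e u w.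

Definition resolving (T : finType) (e : rel T) (W : {set T}) : Prop :=
  forall y z : T, y != z -> exists2 x, x \in W & dist e y x != dist e z x.

Definition wtr_set (T : finType) (e : rel T) (W : {set T}) : Prop :=
  resolving e W /\
  forall w x, w \in W -> x \notin W ->
    exists2 w', w' \in W :\ w & dist e x w' != dist e w w'.

Definition wt_dim_eq (T : finType) (e : rel T) (k : nat) : Prop :=
  (exists W : {set T}, wtr_set e W /\ #|W| = k) /\
  (forall W : {set T}, wtr_set e W -> k <= #|W|).

From mathcomp Require Import all_boot.
Set Implicit Arguments. Unset Strict Implicit. Unset Printing Implicit Defensive.

(* The closed neighbourhood K of a complete vertex v is a clique, so the
   distances from the vertices of K to any fixed vertex x differ by at most
   one and take at most two consecutive values.  Each landmark of a resolving
   set W therefore splits K into at most two classes, whence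
   #|K| <= 2 ^ #|W|.  With #|W| = 2 this gives d(v) + 1 = #|K| <= 4. *)

Lemma bigmin_le (I : eqType) (r : seq I) (P : pred I) (F : I -> nat) idx i :
  i \in r -> P i -> \big[minn/idx]_(j <- r | P j) F j <= F i.
Proof.
elim: r => [|j r IHr] //=; rewrite inE big_cons => /orP[/eqP<- -> | ri Pi].
  exact: geq_minl.
by case: (P j); rewrite ?geq_min IHr ?orbT.
Qed.

Section Distance.

Variables (T : finType) (e : rel T).

Lemma dist_ub x y : dist e x y <= #|T|.
Proof.
rewrite /dist; elim/big_ind: _ => // [m n Hm Hn | i _]; last exact: ltnW.
by rewrite geq_min Hm.
Qed.

Lemma dist_junk_or_ball x y :
  dist e x y = #|T| \/ y \in ball e x (dist e x y).
Proof.
rewrite /dist; elim/big_ind: _ => [| m n Hm Hn | i Hi]; [by left | | by right].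
by rewrite /minn; case: ifP.
Qed.

Lemma dist_le_ball x y n : n < #|T| -> y \in ball e x n -> dist e x y <= n.
Proof.
move=> ltnT yB; rewrite /dist.
apply: (@bigmin_le _ _ _ (fun i : 'I_#|T| => i : nat) _ (Ordinal ltnT)) => //.
exact: mem_index_enum.
Qed.

Lemma in_ballS x n y :
  (y \in ball e x n.+1) = (y \in ball e x n) || [exists z in ball e x n, e z y].
Proof. by rewrite /= !inE. Qed.

Lemma ball_sub_adj u w n : e u w -> ball e w n \subset ball e u n.+1.
Proof.
move=> euw; elim: n => [|n IHn]; apply/subsetP => y.
  rewrite in_ballS inE => /eqP->; apply/orP; right.
  by apply/existsP; exists u; rewrite inE eqxx euw.
rewrite in_ballS (in_ballS u) => /orP[yB | /existsP[z /andP[zB ezy]]].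
  by rewrite (subsetP IHn).
by apply/orP; right; apply/existsP; exists z; rewrite (subsetP IHn).
Qed.

Lemma dist_adj_le u w x : e u w -> dist e u x <= (dist e w x).+1.
Proof.
move=> euw; case: (dist_junk_or_ball w x) => [-> | xB].
  exact: leq_trans (dist_ub u x) _.
case: (ltnP (dist e w x).+1 #|T|) => [ltnT | ?].
  exact/(dist_le_ball ltnT)/(subsetP (ball_sub_adj _ euw)).
exact: leq_trans (dist_ub u x) _.
Qed.

End Distance.

Lemma near_min_two_values (T : finType) (K : {set T}) (f : T -> nat) u0 :
  u0 \in K -> {in K &, forall u w, f u <= (f w).+1} ->
  let m := f [arg min_(w < u0 in K) f w] in {in K, forall u, f u = m \/ f u = m.+1}.
Proof.
move=> Ku0 Kf /=; case: arg_minnP => // w Kw minw u Ku; have ge_uw := minw u Ku.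
move: (Kf u w Ku Kw); rewrite leq_eqVlt ltnS => /orP[/eqP-> | le_uw]; first by right.
by left; apply/eqP; rewrite eqn_leq le_uw.
Qed.

Lemma clique_dist_two_values (T : finType) (e : rel T) (K : {set T}) x u0 :
  u0 \in K -> {in K &, forall u w, u != w -> e u w} ->
  let m := dist e [arg min_(w < u0 in K) dist e w x] x in
  {in K, forall u, dist e u x = m \/ dist e u x = m.+1}.
Proof.
move=> Ku0 cliqueK; apply: near_min_two_values Ku0 _ => u w Ku Kw.
have [-> | neq_uw] := eqVneq u w; first exact: leqnSn.
exact/dist_adj_le/cliqueK.
Qed.

Lemma resolving_card_le (T : finType) (e : rel T) (W K : {set T}) (m : T -> nat) :
  resolving e W ->
  (forall x u, x \in W -> u \in K -> dist e u x = m x \/ dist e u x = (m x).+1) ->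
  #|K| <= 2 ^ #|W|.
Proof.
move=> resW twoK; pose lower u := [set x in W | dist e u x == m x].
have lower_inj : {in K &, injective lower}.
  move=> u w Ku Kw lower_uw; apply/eqP/negPn/negP => /resW[x Wx].
  have /setP/(_ x) := lower_uw; rewrite !inE Wx /=.
  by case: (twoK x u Wx Ku) => ->; case: (twoK x w Wx Kw) => ->;
    rewrite ?eqxx // ?(gtn_eqF (ltnSn _)) //= => /esym/eqP.
rewrite -card_powerset -(card_in_imset lower_inj).
apply/subset_leq_card/subsetP => _ /imsetP[u _ ->]; rewrite powersetE.
by apply/subsetP => x; rewrite inE => /andP[].
Qed.

Lemma closed_nbhd_clique (T : finType) (e : rel T) v :
  simple_graph e -> complete_vertex e v ->
  {in v |: nbhd e v &, forall u w, u != w -> e u w}.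
Proof.
move=> [sym_e _] cv u w; rewrite !inE => /orP[/eqP-> | Nu] /orP[/eqP-> | Nw] //.
- by rewrite eqxx.
- by rewrite sym_e.
- by apply: cv; rewrite inE.
Qed.

Theorem theorem3 (T : finType) (e : rel T) :
  simple_graph e -> connected_graph e -> wt_dim_eq e 2 ->
  ~ (exists v : T, complete_vertex e v /\ 3 < degree e v).
Proof.
move=> simple_e _ [[W [[resW _] cardW]] _] [v [cv deg_v]].
set K := v |: nbhd e v.
have cardK : #|K| = (degree e v).+1.
  by rewrite cardsU1 /nbhd inE simple_e.2.
have Kv : v \in K by rewrite setU11.
pose m x := dist e [arg min_(w < v in K) dist e w x] x.
have twoK x u (_ : x \in W) : u \in K -> dist e u x = m x \/ dist e u x = (m x).+1.
  exact: clique_dist_two_values Kv (closed_nbhd_clique simple_e cv) u.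
have := resolving_card_le resW twoK.
by rewrite cardK cardW ltnNge => /negP; apply.
Qed.
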